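(* If $V\subset\mathcal{A}_0$ is compact, then $(\mathrm{bor}(V))^*=V^*$.
   Context: $D=\{z:|z|<1\}$, $\overline D$ its closure. $\mathcal{A}$ is the space of functions $f(z)=\sum_{k\ge0}a_k(f)z^k$ analytic in $D$, with the topology of locally uniform convergence; $\mathcal{A}_0=\{f\in\mathcal{A}: a_0(f)=1\}$. The Hadamard product is $(f*g)(z)=\sum_{k\ge0}a_k(f)a_k(g)z^k$. For $W\subset\mathcal{A}_0$, $W^*=\{g\in\mathcal{A}_0:(f*g)(z)\ne0 \ \forall z\in D,\ \forall f\in W\}$. For $x\in\overline D$, $(P_xf)(z)=f(xz)$. Let $e\equiv1$. If $V\ne\{e\}$, an element $f\in V$ is a border element of $V$ if whenever $f=P_xg$ with $g\in V$, $x\in\overline D$, then $|x|=1$; $\mathrm{bor}(V)$ is the set of border elements. If $V=\{e\}$, $\mathrm{bor}(V)=\{e\}$. *)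

From HB Require Import structures.
From mathcomp Require Import all_boot all_order all_algebra.
From mathcomp Require Import complex.
From mathcomp Require Import all_classical all_reals all_analysis.
Set Implicit Arguments. Unset Strict Implicit. Unset Printing Implicit Defensive.
Import Order.TTheory GRing.Theory Num.Theory.
Import numFieldNormedType.Exports.
Local Open Scope classical_set_scope.
Local Open Scope ring_scope.
Local Open Scope complex_scope.

Section Defs.
Variable R : realType.
Local Notation C := R[i].

(* An element f = sum a_k z^k of the space A is represented by its coefficient
   sequence a : nat -> C; membership in A means the power series converges at
   every z in the open unit disk D (i.e. radius of convergence >= 1). *)
Definition psum (a : nat -> C) (z : C) : nat -> C :=
  series (fun k => a k * z ^+ k).

Definition tendsto (u : nat -> C) (l : C) : Prop :=
  forall eps : R, 0 < eps -> exists N : nat, forall n, (N <= n)%N -> `|u n - l| < eps%:C.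

Definition hasval (a : nat -> C) (z : C) (l : C) : Prop := tendsto (psum a z) l.

Definition inA (a : nat -> C) : Prop :=
  forall z : C, `|z| < 1 -> exists l, hasval a z l.

Definition A0 : set (nat -> C) := [set a | inA a /\ a 0%N = 1].

Definition hadamard (a b : nat -> C) : nat -> C := fun k => a k * b k.

Definition dual (W : set (nat -> C)) : set (nat -> C) :=
  [set g | A0 g /\ forall f, W f -> forall (z l : C), `|z| < 1 -> hasval (hadamard f g) z l -> l != 0].

(* (P_x f)(z) = f(xz): coefficients a_k x^k *)
Definition Pop (x : C) (a : nat -> C) : nat -> C := fun k => a k * x ^+ k.

Definition eA : nat -> C := fun k => if k is 0%N then 1 else 0.

Definition bor (V : set (nat -> C)) : set (nat -> C) :=
  [set f | (V = [set eA] /\ f = eA) \/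
            (V <> [set eA] /\ V f /\ forall (g : nat -> C) (x : C), V g -> `|x| <= 1 ->
                  f = Pop x g -> `|x| = 1)].

(* Topology of locally uniform convergence on A: U (a subset of A) is open iff
   around each of its points it contains a basic neighbourhood
   {g in A : |g(z) - f(z)| < eps for all |z| <= r}, with 0 <= r < 1, eps > 0. *)
Definition openA (U : set (nat -> C)) : Prop :=
  U `<=` inA /\
  forall f, U f -> exists r : R, exists eps : R, [/\ 0 <= r, r < 1, 0 < eps &
     forall g, inA g -> (forall z lg lf : C, `|z| <= r%:C -> hasval g z lg -> hasval f z lf ->
                  `|lg - lf| < eps%:C) -> U g].

Definition compactA (V : set (nat -> C)) : Prop :=
  V `<=` inA /\
  forall F : set (set (nat -> C)), (forall U, F U -> openA U) ->
    V `<=` \bigcup_(U in F) U ->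
    exists s : seq (set (nat -> C)), (forall U, U \in s -> F U) /\
      V `<=` \bigcup_(U in [set U | U \in s]) U.

End Defs.

From mathcomp Require Import all_boot all_order all_algebra.
From mathcomp Require Import complex.
From mathcomp Require Import all_classical all_reals all_analysis.
From mathcomp Require Import ring lra.
Import Order.TTheory GRing.Theory Num.Theory ComplexField.Normc.
Import numFieldNormedType.Exports.
Local Open Scope classical_set_scope.

(* Every f in V other than e factors as f = P_x g with g in V and |x| <= 1 (take x = 1),
   and some such factorisation has minimal |x|: along a minimising sequence (g_n, x_n) the
   x_n have a convergent subsequence, compactness of V gives a cluster point g of the g_n,
   and as f(z) = g_n(x_n z) the functions f and P_x g agree on (0, 1/2], hence everywhere.
   Then x <> 0, since P_0 g = e, and g is a border element: g = P_y h with h in V and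
   |y| <= 1 gives the factorisation f = P_(xy) h, so |x| <= |x| |y| and |y| = 1.  Finally
   (f * g')(z) = (g * g')(x z) with |x z| < 1, and e * g' = e, so V^* contains (bor V)^*;
   the converse inclusion holds because bor V is a subset of V. *)

Section BorderDual.
Local Set Implicit Arguments. Local Unset Strict Implicit.
Local Open Scope ring_scope.
Local Open Scope complex_scope.
Variable R : realType.
Local Notation C := R[i].
Implicit Types (a b c f g h : nat -> C) (x y z w l : C).

Lemma normrc z : `|z| = (normc z)%:C.
Proof. by []. Qed.

Lemma normc_ge0 z : 0 <= normc z.
Proof. by rewrite -ler0c -normrc. Qed.

Lemma normcX z k : normc (z ^+ k) = normc z ^+ k.
Proof. by apply: complexI; rewrite rmorphXn /= -!normrc normrX. Qed.

Lemma normcR (t : R) : normc t%:C = `|t|.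
Proof. by rewrite /= expr0n /= addr0 sqrtr_sqr. Qed.

Lemma distcC x y : normc (x - y) = normc (y - x).
Proof. by rewrite -normcN opprB. Qed.

Lemma ler_distcD x y z : normc (x - z) <= normc (x - y) + normc (y - z).
Proof. by rewrite -[x - z](subrKA y) le_normcD. Qed.

Lemma normr_ltc z (r : R) : (`|z| < r%:C) = (normc z < r).
Proof. by rewrite normrc ltcR. Qed.

Lemma normr_lec z (r : R) : (`|z| <= r%:C) = (normc z <= r).
Proof. by rewrite normrc lecR. Qed.

Lemma normr_lt1 z : (`|z| < 1) = (normc z < 1).
Proof. exact: normr_ltc. Qed.

Lemma normcM_le1 x z : normc x <= 1 -> normc (x * z) <= normc z.
Proof. by move=> x1; rewrite normcM ler_piMl ?normc_ge0. Qed.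

Lemma tendstoP (u : nat -> C) l : tendsto u l <->
  forall eps, 0 < eps -> exists N, forall n, (N <= n)%N -> normc (u n - l) < eps.
Proof. by split=> h eps /h [N hN]; exists N => n /hN; rewrite normrc ltcR. Qed.

Lemma tendsto_cst l : tendsto (fun=> l) l.
Proof. by apply/tendstoP => eps eps0; exists 0%N => n _; rewrite subrr normc0. Qed.

Lemma tendsto_normcB_le (u v : nat -> C) l (l' : C) (K : R) :
  tendsto u l -> tendsto v l' ->
  (exists N, forall n, (N <= n)%N -> normc (u n - v n) <= K) -> normc (l - l') <= K.
Proof.
move=> /tendstoP ul /tendstoP vl' [N uvK]; apply/ler_addgt0Pr => e e0.
have e2 : 0 < e / 2 by rewrite divr_gt0.
have [[Nu hu] [Nv hv]] := (ul _ e2, vl' _ e2).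
pose n := maxn N (maxn Nu Nv).
have := uvK n (leq_maxl _ _).
have := hu n (leq_trans (leq_maxl _ _) (leq_maxr _ _)).
have := hv n (leq_trans (leq_maxr _ _) (leq_maxr _ _)).
have := ler_distcD l (u n) l'; have := ler_distcD (u n) (v n) l'.
rewrite (distcC l (u n)); lra.
Qed.

Lemma tendsto_unique (u : nat -> C) l (l' : C) : tendsto u l -> tendsto u l' -> l = l'.
Proof.
move=> ul ul'; apply/eqP; rewrite -subr_eq0; apply/eqP/eq0_normc/eqP.
rewrite eq_le normc_ge0 andbT; apply: tendsto_normcB_le ul ul' _.
by exists 0%N => n _; rewrite subrr normc0.
Qed.

Lemma tendsto_normc_le (u : nat -> C) l (K : R) :
  tendsto u l -> (exists N, forall n, (N <= n)%N -> normc (u n) <= K) -> normc l <= K.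
Proof.
move=> ul [N uK]; rewrite -[l]subr0; apply: tendsto_normcB_le ul (tendsto_cst 0) _.
by exists N => n /uK; rewrite subr0.
Qed.

Lemma tendstoB (u v : nat -> C) l (l' : C) :
  tendsto u l -> tendsto v l' -> tendsto (fun n => u n - v n) (l - l').
Proof.
move=> /tendstoP ul /tendstoP vl'; apply/tendstoP => e e0.
have e2 : 0 < e / 2 by rewrite divr_gt0.
have [[Nu hu] [Nv hv]] := (ul _ e2, vl' _ e2).
exists (maxn Nu Nv) => n; rewrite geq_max => /andP[/hu lu /hv lv].
have -> : u n - v n - (l - l') = (u n - l) - (v n - l') by ring.
have := le_normcD (u n - l) (- (v n - l')); rewrite normcN; lra.
Qed.

Lemma tendsto_bounded (u : nat -> C) l :
  tendsto u l -> exists B, forall n, normc (u n) <= B.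
Proof.
move=> /tendstoP /(_ 1 ltr01) [N uN].
exists (normc l + 1 + \sum_(k < N) normc (u k)) => n; have := normc_ge0 l.
have [nN|Nn] := ltnP n N.
  rewrite (bigD1 (Ordinal nN)) //=.
  have : 0 <= \sum_(k < N | k != Ordinal nN) normc (u k).
    by rewrite sumr_ge0 // => k _; exact: normc_ge0.
  lra.
have : 0 <= \sum_(k < N) normc (u k) by rewrite sumr_ge0 // => k _; exact: normc_ge0.
have := uN n Nn; have := le_normcD (u n - l) l; rewrite subrK; lra.
Qed.

Lemma normc_series_le (u : nat -> C) n :
  normc (series u n) <= series (fun k => normc (u k)) n.
Proof.
rewrite !seriesEord /= -lecR rmorph_sum /= -normrc.
exact: (le_trans (ler_norm_sum _ _ _)).
Qed.

Lemma ler_series (u v : nat -> R) n : (forall k, u k <= v k) -> series u n <= series v n.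
Proof. by move=> uv; rewrite !seriesEord /= ler_sum. Qed.

Lemma psumB a b z n : psum (fun k => a k - b k) z n = psum a z n - psum b z n.
Proof.
by rewrite /psum !seriesEord /= -sumrB; apply: eq_bigr => k _; rewrite mulrBl.
Qed.

Lemma psumS_tail c z n : psum c z n.+1 = c 0%N + z * psum (fun k => c k.+1) z n.
Proof.
rewrite /psum !seriesEord /= big_ord_recl expr0 mulr1 mulr_sumr; congr (_ + _).
by apply: eq_bigr => k _; rewrite exprS; ring.
Qed.

Lemma hasval_unique a z l (l' : C) : hasval a z l -> hasval a z l' -> l = l'.
Proof. exact: tendsto_unique. Qed.

Lemma hasvalB a b z l (l' : C) : hasval a z l -> hasval b z l' ->
  hasval (fun k => a k - b k) z (l - l').
Proof.
by move=> al bl'; rewrite /hasval (funext (psumB a b z)); apply: tendstoB.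
Qed.

Lemma hasval_Pop x a z l : hasval (Pop x a) z l <-> hasval a (x * z) l.
Proof.
rewrite /hasval (_ : psum (Pop x a) z = psum a (x * z)) //.
by apply/funext => n; rewrite /psum !seriesEord; apply: eq_bigr => k _; rewrite exprMn mulrA.
Qed.

Lemma inAB a b : inA a -> inA b -> inA (fun k => a k - b k).
Proof.
move=> aA bA z z1; have [[la al] [lb bl]] := (aA z z1, bA z z1).
by exists (la - lb); exact: hasvalB.
Qed.

Lemma inA_Pop x a : normc x <= 1 -> inA a -> inA (Pop x a).
Proof.
move=> x1 aA z; rewrite !normr_lt1 => z1.
have [|l al] := aA (x * z); first by rewrite normr_lt1 (le_lt_trans (normcM_le1 z x1)).
by exists l; apply/hasval_Pop.
Qed.

Definition coef_bounded (s : R) a := exists B, forall k, normc (a k) * s ^+ k <= B.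

Lemma coef_bound_ge0 a (s B : R) : (forall k, normc (a k) * s ^+ k <= B) -> 0 <= B.
Proof. by move=> /(_ 0%N); rewrite expr0 mulr1; apply: le_trans; exact: normc_ge0. Qed.

Lemma inA_coef_bounded a (s : R) : 0 <= s -> s < 1 -> inA a -> coef_bounded s a.
Proof.
move=> s0 s1 aA; have [|l al] := aA s%:C; first by rewrite normr_lt1 normcR ger0_norm.
have [B psumB] := tendsto_bounded al; exists (B + B) => k.
have -> : normc (a k) * s ^+ k = normc (psum a s%:C k.+1 - psum a s%:C k).
  by rewrite /psum seriesSB normcM normcX normcR ger0_norm.
by apply: le_trans (le_normcD _ _) _; rewrite normcN lerD.
Qed.

Lemma coef_bounded_tail (s : R) c :
  0 < s -> coef_bounded s c -> coef_bounded s (fun k => c k.+1).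
Proof.
by move=> s0 [B cB]; exists (B / s) => k; rewrite ler_pdivlMr // -mulrA -exprSr.
Qed.

Lemma series_le_geometric (u : nat -> R) (B q : R) n : 0 <= B -> 0 < q -> q < 1 ->
  (forall k, u k <= B * q ^+ k) -> series u n <= B / (1 - q).
Proof.
move=> B0 q0 q1 uB; apply: le_trans (geometric_le_lim n B0 q0 _); last by rewrite ger0_norm ?ltW.
exact: ler_series.
Qed.

Lemma normc_psum_le a (s q B : R) z n : 0 <= s -> 0 < q -> q < 1 ->
  (forall k, normc (a k) * s ^+ k <= B) -> normc z <= s * q ->
  normc (psum a z n) <= B / (1 - q).
Proof.
move=> s0 q0 q1 aB zsq; have q0' := ltW q0.
apply: le_trans (normc_series_le _ _) _.
apply: series_le_geometric (coef_bound_ge0 aB) q0 q1 _ => k.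
rewrite normcM normcX; apply: le_trans (_ : normc (a k) * (s * q) ^+ k <= _).
  by rewrite ler_wpM2l ?normc_ge0 // lerXn2r ?nnegrE ?normc_ge0 ?mulr_ge0.
by rewrite exprMn mulrA ler_wpM2r ?exprn_ge0.
Qed.

(* The sharp factor k 2^(1-k) is replaced by the geometric majorant 8 (5/8)^k,
   with 5/8 = 3/4 * 5/6 so that it is absorbed by the coefficient bound at 3/4. *)
Lemma normc_subX_le w (w' : C) k : normc w <= 1/2 -> normc w' <= 1/2 ->
  normc (w ^+ k - w' ^+ k) <= 8 * (5/8) ^+ k * normc (w - w').
Proof.
move=> w2 w'2; have d0 := normc_ge0 (w - w'); elim: k => [|k IH].
  by rewrite !expr0 subrr normc0 mulr1 mulr_ge0.
have -> : w ^+ k.+1 - w' ^+ k.+1 = w * (w ^+ k - w' ^+ k) + (w - w') * w' ^+ k.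
  by rewrite !exprS; ring.
apply: le_trans (le_normcD _ _) _; rewrite !normcM normcX exprS.
have q0 : 0 <= (5/8 : R) ^+ k by rewrite exprn_ge0.
have h1 : normc w * normc (w ^+ k - w' ^+ k) <= 1/2 * (8 * (5/8) ^+ k * normc (w - w')).
  by rewrite ler_pM ?normc_ge0.
have h2 : normc w' ^+ k <= (1/2) ^+ k by rewrite lerXn2r ?nnegrE ?normc_ge0.
have h3 : (1/2 : R) ^+ k <= (5/8) ^+ k by rewrite lerXn2r ?nnegrE //; lra.
have : normc (w - w') * normc w' ^+ k <= normc (w - w') * (5/8) ^+ k.
  by rewrite ler_wpM2l // (le_trans h2).
have : 0 <= normc (w - w') * (5/8) ^+ k by rewrite mulr_ge0.
lra.
Qed.

Lemma hasval_lipschitz a : inA a -> exists2 L : R, 0 <= L & forall w (w' : C) l (l' : C),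
  normc w <= 1/2 -> normc w' <= 1/2 -> hasval a w l -> hasval a w' l' ->
  normc (l - l') <= L * normc (w - w').
Proof.
move=> aA; have [||B aB] := inA_coef_bounded (s := 3/4) _ _ aA; try lra.
have B0 := coef_bound_ge0 aB.
exists (8 * B / (1 - 5/6)); first by rewrite divr_ge0 ?mulr_ge0 //; lra.
move=> w w' l l' w2 w'2 al al'; apply: tendsto_normcB_le al al' _; exists 0%N => n _.
have -> : psum a w n - psum a w' n = series (fun k => a k * (w ^+ k - w' ^+ k)) n.
  by rewrite /psum !seriesEord /= -sumrB; apply: eq_bigr => k _; rewrite mulrBr.
set d := normc (w - w'); have d0 : 0 <= d := normc_ge0 _.
have -> : 8 * B / (1 - 5/6) * d = 8 * d * B / (1 - 5/6) by ring.
apply: le_trans (normc_series_le _ _) _.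
apply: series_le_geometric; [by rewrite !mulr_ge0 | lra | lra | move=> k].
rewrite normcM; apply: le_trans (_ : normc (a k) * (8 * (5/8) ^+ k * d) <= _).
  by rewrite ler_wpM2l ?normc_ge0 ?normc_subX_le.
have -> : (5/8 : R) = 3/4 * (5/6) by field.
have -> : normc (a k) * (8 * (3/4 * (5/6)) ^+ k * d) =
    8 * d * (5/6) ^+ k * (normc (a k) * (3/4) ^+ k) by rewrite exprMn; ring.
by rewrite [X in _ <= X]mulrAC; apply: ler_wpM2l (aB k); rewrite !mulr_ge0 ?exprn_ge0.
Qed.

Lemma tendstoS (u : nat -> C) l : tendsto u l -> tendsto (fun n => u n.+1) l.
Proof. by move=> /tendstoP ul; apply/tendstoP => e /ul [N uN]; exists N => n /leqW /uN. Qed.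

Lemma le0_of_le_linear (x K : R) : (forall t, 0 < t -> t <= 1/2 -> x <= K * t) -> x <= 0.
Proof.
move=> xK; apply/ler_addgt0Pr => e e0; rewrite add0r.
have K1 : 0 < `|K| + 1 by rewrite ltr_wpDl.
pose t := Num.min (1/2) (e / (`|K| + 1)).
have t0 : 0 < t by rewrite /t lt_min (divr_gt0 e0 K1) andbT; lra.
have t2 : t <= 1/2 by rewrite /t ge_min lexx.
have te : t <= e / (`|K| + 1) by rewrite /t ge_min lexx orbT.
apply: le_trans (xK t t0 t2) _; apply: le_trans (_ : `|K| * (e / (`|K| + 1)) <= _).
  exact: le_trans (ler_wpM2r (ltW t0) (ler_norm K)) (ler_wpM2l (normr_ge0 K) te).
by rewrite mulrA ler_pdivrMr // mulrC ler_pM2l // lerDl.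
Qed.

Lemma coef0_eq0_of_vanishing c : coef_bounded (3/4) c ->
  (forall t : R, 0 < t -> t <= 1/2 -> hasval c t%:C 0) -> c 0%N = 0.
Proof.
move=> cb c0; have [|B cB] := coef_bounded_tail _ cb; first lra.
apply/eq0_normc/eqP; rewrite eq_le normc_ge0 andbT.
apply: (@le0_of_le_linear _ (B / (1 - 2/3))) => t t0 t2.
rewrite -[c 0%N]subr0; apply: tendsto_normcB_le (tendsto_cst _) (tendstoS (c0 t t0 t2)) _.
exists 0%N => n _; rewrite psumS_tail opprD addNKr normcN normcM normcR (ger0_norm (ltW t0)).
rewrite mulrC ler_pM2r //; apply: normc_psum_le cB _; rewrite ?normcR ?(ger0_norm (ltW t0)); lra.
Qed.

Lemma coef_eq0_of_vanishing c : coef_bounded (3/4) c ->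
  (forall t : R, 0 < t -> t <= 1/2 -> hasval c t%:C 0) -> forall k, c k = 0.
Proof.
move=> + + k; elim: k c => [|k IH] c cb c0; first exact: coef0_eq0_of_vanishing.
apply: (IH (fun k => c k.+1)); first by apply: coef_bounded_tail cb; lra.
move=> t t0 t2; have /tendstoP ct := tendstoS (c0 t t0 t2); apply/tendstoP => e e0.
have [N cN] := ct (t * e) (mulr_gt0 t0 e0); exists N => n /cN.
rewrite psumS_tail (coef0_eq0_of_vanishing cb c0) add0r !subr0 normcM normcR.
by rewrite (ger0_norm (ltW t0)) ltr_pM2l.
Qed.

Lemma inA_eq_of_values a b : inA a -> inA b ->
  (forall t : R, 0 < t -> t <= 1/2 ->
     forall la lb, hasval a t%:C la -> hasval b t%:C lb -> la = lb) ->
  a = b.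
Proof.
move=> aA bA ab; apply/funext => k; apply/eqP; rewrite -subr_eq0; apply/eqP; move: k.
apply: coef_eq0_of_vanishing; first by apply: inA_coef_bounded (inAB aA bA); lra.
move=> t t0 t2; have t1 : `|t%:C| < 1 by rewrite normr_lt1 normcR ger0_norm ?ltW //; lra.
have [[la al] [lb bl]] := (aA _ t1, bA _ t1).
by rewrite -(subrr la) {2}(ab t t0 t2 la lb al bl); apply: hasvalB.
Qed.

Definition close_on_disk (r e : R) g h := forall z lg lh,
  normc z <= r -> hasval g z lg -> hasval h z lh -> normc (lg - lh) < e.

(* A basic neighbourhood of h for the topology of [openA]; the slack [d] makes it open. *)
Definition disk_ball h (r e : R) : set (nat -> C) :=
  [set g | inA g /\ exists2 d, 0 < d & close_on_disk r (e - d) g h].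

Lemma disk_ball_open h (r e : R) : 0 <= r -> r < 1 -> openA (disk_ball h r e).
Proof.
move=> r0 r1; split=> [g [] //|g [gA [d d0 gh]]].
exists r, (d / 2); split=> // [|u uA ug]; first by rewrite divr_gt0.
split=> //; exists (d / 2); first by rewrite divr_gt0.
move=> z lu lh zr ul hl; have [|lg gl] := gA z; first by rewrite normr_lt1 (le_lt_trans zr).
have := ug z lu lg; rewrite normr_lec normr_ltc => /(_ zr ul gl).
have := gh z lg lh zr gl hl; have := ler_distcD lu lg lh; lra.
Qed.

Lemma disk_ball_center h (r e : R) : 0 < e -> inA h -> disk_ball h r e h.
Proof.
move=> e0 hA; split=> //; exists (e / 2) => [|z l l' _ hl hl']; first by rewrite divr_gt0.
by rewrite (hasval_unique hl hl') subrr normc0; lra.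
Qed.

Lemma disk_ball_close h g (r e : R) : disk_ball h r e g -> close_on_disk r e g h.
Proof. by move=> [_ [d d0 gh]] z lg lh zr gl hl; have := gh z lg lh zr gl hl; lra. Qed.

Lemma eventually_forall_seq (T : eqType) (s : seq T) (P : T -> nat -> Prop) :
  (forall U, U \in s -> exists M, forall n, (M <= n)%N -> P U n) ->
  exists M, forall U, U \in s -> forall n, (M <= n)%N -> P U n.
Proof.
elim: s => [|U s IH] sP; first by exists 0%N.
have [|M sM] := IH; first by move=> V Vs; apply: sP; rewrite in_cons Vs orbT.
have [MU UM] := sP U (mem_head _ _); exists (maxn MU M) => V.
rewrite in_cons => /orP[/eqP -> | Vs] n; rewrite geq_max => /andP[MUn Mn]; [exact: UM | exact: sM].
Qed.

Lemma compactA_cluster (V : set (nat -> C)) (u : nat -> nat -> C) :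
  compactA V -> (forall n, V (u n)) ->
  exists2 g, V g & forall (r e : R) M, 0 <= r -> r < 1 -> 0 < e ->
    exists2 n, (M <= n)%N & close_on_disk r e (u n) g.
Proof.
move=> [VA Vcover] Vu; apply: contrapT => no_cluster.
have far g : V g -> exists r e M, [/\ 0 <= r, r < 1, 0 < e &
    forall n, (M <= n)%N -> ~ disk_ball g r e (u n)].
  move=> Vg; apply: contrapT => near_g; apply: no_cluster; exists g => // r e M r0 r1 e0.
  apply: contrapT => far_n; apply: near_g; exists r, e, M; split=> // n Mn /disk_ball_close.
  by move=> close_n; apply: far_n; exists n.
pose F := [set U | openA U /\ exists M, forall n, (M <= n)%N -> ~ U (u n)].
have [|s [sF Vs]] := Vcover F (fun U FU => FU.1).
  move=> g Vg; have [r [e [M [r0 r1 e0 gM]]]] := far g Vg.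
  exists (disk_ball g r e); last exact: disk_ball_center e0 (VA g Vg).
  by split; [exact: disk_ball_open | exists M].
have [|M sM] := @eventually_forall_seq _ s (fun U n => ~ U (u n)); first by move=> U /sF [].
by have [U Us UuM] := Vs _ (Vu M); exact: sM U Us M (leqnn _) UuM.
Qed.

Lemma increasing_seq_ge (f : nat -> nat) : increasing_seq f -> forall n, (n <= f n)%N.
Proof.
move=> /increasing_seqP f_incr; elim=> [//|n IH].
exact: leq_ltn_trans IH (f_incr n).
Qed.

Lemma cvgn_ltP (u : nat -> R) : cvgn u ->
  exists l : R, forall e, 0 < e -> exists N, forall n, (N <= n)%N -> `|u n - l| < e.
Proof.
move=> /cvg_ex [l /cvgrPdist_lt ul]; exists l => e /ul [N _ uN].
by exists N => n /uN; rewrite distrC.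
Qed.

Lemma normc_Re_le z : `|complex.Re z| <= normc z.
Proof. by case: z => u v; rewrite /= -sqrtr_sqr ler_wsqrtr // lerDl sqr_ge0. Qed.

Lemma normc_Im_le z : `|complex.Im z| <= normc z.
Proof. by case: z => u v; rewrite /= -sqrtr_sqr ler_wsqrtr // lerDr sqr_ge0. Qed.

Lemma normc_le_ReIm z : normc z <= `|complex.Re z| + `|complex.Im z|.
Proof.
case: z => u v /=; rewrite -[X in _ <= X]ger0_norm ?addr_ge0 // -sqrtr_sqr ler_wsqrtr //.
by rewrite sqrrD !real_normK ?num_real // -addrA lerD2l lerDr mulrn_wge0 // mulr_ge0.
Qed.

Lemma bounded_cvg_subseq (X : nat -> C) (b : R) : (forall n, normc (X n) <= b) ->
  exists psi x, (forall n, (n <= psi n)%N) /\ tendsto (X \o psi) x.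
Proof.
move=> Xb.
have bounded_by (v : nat -> R) : (forall n, `|v n| <= b) -> bounded_fun v.
  move=> vb; exists b; split=> [|M bM y _]; first exact: num_real.
  exact: le_trans (vb y) (ltW bM).
have [phi phi_incr /cvgn_ltP [a ReX]] := bolzano_weierstrass
  (bounded_by (fun n => complex.Re (X n)) (fun n => le_trans (normc_Re_le _) (Xb n))).
have [chi chi_incr /cvgn_ltP [c ImX]] := bolzano_weierstrass
  (bounded_by (fun n => complex.Im (X (phi n))) (fun n => le_trans (normc_Im_le _) (Xb _))).
exists (phi \o chi), (a +i* c); split.
  by move=> n; apply: leq_trans (increasing_seq_ge chi_incr n) (increasing_seq_ge phi_incr _).
apply/tendstoP => e e0; have e2 : 0 < e / 2 by rewrite divr_gt0.
have [[Na Ra] [Nc Ic]] := (ReX _ e2, ImX _ e2).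
exists (maxn Na Nc) => n; rewrite geq_max => /andP[Nan /Ic Icn].
move: (Ra (chi n) (leq_trans Nan (increasing_seq_ge chi_incr n))) Icn => /=.
case: (X (phi (chi n))) => p q /= Rn In.
by have := normc_le_ReIm ((p +i* q) - (a +i* c)); rewrite /=; lra.
Qed.

Lemma Pop1 a : Pop 1 a = a.
Proof. by apply/funext => k; rewrite /Pop expr1n mulr1. Qed.

Lemma PopM x y a : Pop x (Pop y a) = Pop (x * y) a.
Proof. by apply/funext => k; rewrite /Pop exprMn; ring. Qed.

Lemma Pop0 a : a 0%N = 1 -> Pop 0 a = eA R.
Proof.
by move=> a0; apply/funext => -[|k]; rewrite /Pop /eA ?a0 ?mulr1 // exprS mul0r mulr0.
Qed.

Lemma Pop_limit f g (G : nat -> nat -> C) (X : nat -> C) x : inA f -> inA g ->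
  (forall n, f = Pop (X n) (G n)) -> (forall n, normc (X n) <= 1) -> tendsto X x ->
  (forall (e : R) M, 0 < e -> exists2 n, (M <= n)%N & close_on_disk (1/2) e (G n) g) ->
  f = Pop x g.
Proof.
move=> fA gA fG X1 Xx Gg; have x1 : normc x <= 1.
  by apply: tendsto_normc_le Xx _; exists 0%N.
apply: inA_eq_of_values fA (inA_Pop x1 gA) _ => t t0 t2 lf lg fl /hasval_Pop gl.
apply/eqP; rewrite -subr_eq0; apply/eqP/eq0_normc/eqP; rewrite eq_le normc_ge0 andbT.
apply/ler_addgt0Pr => e e0; rewrite add0r.
have [L L0 gL] := hasval_lipschitz gA.
have e2 : 0 < e / 2 by rewrite divr_gt0.
have [d d0 Ld] : exists2 d, 0 < d & L * d <= e / 2.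
  exists (e / 2 / (L + 1)); first by rewrite divr_gt0 // ltr_wpDl.
  by rewrite mulrA ler_pdivrMr ?ltr_wpDl // mulrC ler_pM2l // lerDl.
have [N XN] := (tendstoP _ _).1 Xx d d0.
have [n Nn Gng] := Gg _ N e2.
have tz : normc t%:C <= 1/2 by rewrite normcR (ger0_norm (ltW t0)).
have w2 : normc (X n * t%:C) <= 1/2 := le_trans (normcM_le1 _ (X1 n)) tz.
have [|lw gw] := gA (X n * t%:C); first by rewrite normr_lt1 (le_lt_trans w2) //; lra.
have Gw : hasval (G n) (X n * t%:C) lf by apply/hasval_Pop; rewrite -fG.
have := Gng _ _ _ w2 Gw gw.
have := gL _ _ _ _ w2 (le_trans (normcM_le1 _ x1) tz) gw gl.
rewrite -mulrBl normcM; have : L * (normc (X n - x) * normc t%:C) <= e / 2.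
  apply: le_trans Ld; rewrite ler_wpM2l //; apply: le_trans (ltW (XN n Nn)).
  by rewrite ler_piMr ?normc_ge0 //; lra.
have := ler_distcD lf lw lg; lra.
Qed.

Lemma exists_min_factor (V : set (nat -> C)) f :
  V `<=` A0 (R:=R) -> compactA V -> V f ->
  exists g x, [/\ V g, normc x <= 1, f = Pop x g &
    forall h y, V h -> normc y <= 1 -> f = Pop y h -> normc x <= normc y].
Proof.
move=> VA0 cV Vf; have VA g : V g -> inA g by move=> /VA0 [].
pose S := [set normc y | y in [set y | exists2 h, V h & normc y <= 1 /\ f = Pop y h]].
have S_lb : has_lbound S by exists 0 => _ [y _ <-]; exact: normc_ge0.
have S_inf : has_inf S.
  by split=> //; exists 1, 1; [exists f; rewrite ?normc1 ?Pop1 | exact: normc1].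
have S_inf_le h y : V h -> normc y <= 1 -> f = Pop y h -> inf S <= normc y.
  by move=> Vh y1 fy; apply: ge_inf S_lb _ _; exists y => //; exists h.
have minimizing n : exists hy : (nat -> C) * C,
    [/\ V hy.1, normc hy.2 <= 1, f = Pop hy.2 hy.1 & normc hy.2 < inf S + n.+1%:R^-1].
  have n0 : 0 < n.+1%:R^-1 :> R by rewrite invr_gt0.
  have [_ [y [h Vh [y1 fy]] <-] yS] := inf_adherent n0 S_inf.
  by exists (h, y).
have [GX /all_and4 [VG X1 fGX X_inf]] := choice minimizing.
have [psi [x [psi_ge Xx]]] := bounded_cvg_subseq (fun n => X1 n).
have [g Vg Gg] := compactA_cluster cV (fun n => VG (psi n)).
have fx : f = Pop x g.
  apply: Pop_limit (VA f Vf) (VA g Vg) (fun n => fGX (psi n)) (fun n => X1 (psi n)) Xx _.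
  by move=> e M e0; apply: Gg => //; lra.
have x_min : normc x <= inf S.
  apply/ler_addgt0Pr => e e0; apply: tendsto_normc_le Xx _.
  have [N _ Ne] := near_infty_natSinv_lt (PosNum e0).
  exists N => n Nn; apply/ltW/(lt_le_trans (X_inf (psi n))).
  by rewrite lerD2l ltW // Ne //= (leq_trans Nn (psi_ge n)).
have x1 : normc x <= 1.
  by rewrite -normc1; apply: le_trans x_min (S_inf_le f 1 Vf _ (esym (Pop1 f))); rewrite normc1.
by exists g, x; split=> // h y Vh y1 fy; exact: le_trans x_min (S_inf_le h y Vh y1 fy).
Qed.

Lemma border_factor (V : set (nat -> C)) f :
  V `<=` A0 (R:=R) -> compactA V -> V f -> f <> eA R ->
  exists h x, [/\ bor V h, normc x <= 1 & f = Pop x h].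
Proof.
move=> VA0 cV Vf fe; have [g [x [Vg x1 fx x_min]]] := exists_min_factor VA0 cV Vf.
have x0 : 0 < normc x.
  rewrite lt_neqAle normc_ge0 andbT eq_sym; apply: contra_notN fe => /eqP/eq0_normc x0.
  by rewrite fx x0 Pop0 //; case: (VA0 g Vg).
exists g, x; split=> //; right; split; first by move=> VeA; apply: fe; move: Vf; rewrite VeA.
split=> // h y Vh; rewrite normr_lec => y1 gy.
have y_ge1 : 1 <= normc y.
  rewrite -(ler_pM2l x0) mulr1 -normcM; apply: x_min Vh _ _.
    by rewrite normcM mulr_ile1 ?normc_ge0.
  by rewrite fx gy PopM.
by rewrite normrc (_ : normc y = 1) //; apply/eqP; rewrite eq_le y1 y_ge1.
Qed.

Lemma bor_subset (V : set (nat -> C)) : bor V `<=` V.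
Proof. by move=> f [[-> ->] | [_ []]]. Qed.

Lemma dual_antimono (W1 W2 : set (nat -> C)) : W1 `<=` W2 -> dual W2 `<=` dual W1.
Proof. by move=> W12 g [gA0 gW2]; split=> // f /W12; exact: gW2. Qed.

Lemma hasval_eA z l : hasval (eA R) z l -> l = 1.
Proof.
move/hasval_unique; apply; apply/tendstoP => e e0; exists 1%N => -[//|n] _.
rewrite psumS_tail /= (_ : psum _ z n = 0) ?mulr0 ?addr0 ?subrr ?normc0 //.
by rewrite /psum seriesEord /= big1 // => k _; rewrite mul0r.
Qed.

Lemma hadamard_eA g : g 0%N = 1 -> hadamard (eA R) g = eA R.
Proof. by move=> g0; apply/funext => -[|k]; rewrite /hadamard /eA ?g0 ?mulr1 ?mul0r. Qed.

Lemma hadamard_Pop x h g : hadamard (Pop x h) g = Pop x (hadamard h g).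
Proof. by apply/funext => k; rewrite /hadamard /Pop mulrAC. Qed.

End BorderDual.

Theorem corollary3 (R : realType) (V : set (nat -> R[i])) :
  V `<=` A0 (R:=R) -> compactA V -> dual (bor V) = dual V.
Proof.
move=> VA0 cV; apply/seteqP; split; last exact: dual_antimono (@bor_subset R V).
move=> g [gA0 g_dual]; split=> // f Vf z l z1.
have [->|fe] := pselect (f = eA R).
  by rewrite hadamard_eA ?gA0.2 // => /hasval_eA ->; rewrite oner_neq0.
have [h [x [bh x1 ->]]] := border_factor VA0 cV Vf fe.
rewrite hadamard_Pop => /hasval_Pop; apply: g_dual bh _ _ _.
by move: z1; rewrite !normr_lt1; apply: le_lt_trans (normcM_le1 z x1).
Qed.
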